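(* Let $b>0$. For $\lambda\in\mathbb{C}\setminus[2,\infty)$ write $\lambda=-2\cos(\omega)$ with $\omega\in\Omega=\{\omega\in\mathbb{C}:\ \operatorname{Re}\omega\in[0,\pi),\ \operatorname{Im}\omega\in\mathbb{R}\}$, and define $$G_\lambda(x)=\frac{1}{2b\sin(\omega)}\,\frac{\sinh\left(\frac{\omega}{b}x\right)}{\sinh\left(\frac{\pi}{b}x\right)},\qquad x\in\mathbb{R}\setminus\{0\},\qquad G_\lambda(0)=\frac{1}{2\pi b}\,\frac{\omega}{\sin(\omega)}.$$ Then for every $\lambda\in\mathbb{C}\setminus[2,\infty)$, $$|G_\lambda(x)|\le|G_\lambda(0)|\quad\text{for all }x\in\mathbb{R}.$$
   Context: $G_\lambda(x-y)$ is the integral kernel of the resolvent $(W_0(b)-\lambda)^{-1}$, where $W_0(b)$ is multiplication by $2\cosh(2\pi bk)$ in Fourier space. The value $G_\lambda(0)$ is the limit of $G_\lambda(x)$ as $x\to0$. At $\omega=0$ (i.e. $\lambda=-2$) the expressions are understood by continuity in $\omega$: $\frac{\sinh(\omega x/b)}{\sin\omega}\to x/b$ and $\frac{\omega}{\sin\omega}\to1$. *)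

From Stdlib Require Import Reals.
From Coquelicot Require Import Coquelicot.
Open Scope R_scope.

Definition Cexp (z : C) : C := (exp (Re z) * cos (Im z), exp (Re z) * sin (Im z)).

Definition Csin (z : C) : C := ((Cexp (Ci * z) - Cexp (- (Ci * z))) / (2 * Ci))%C.
Definition Ccos (z : C) : C := ((Cexp (Ci * z) + Cexp (- (Ci * z))) / 2)%C.
Definition Csinh (z : C) : C := ((Cexp z - Cexp (- z)) / 2)%C.

Definition Ceq_dec (z w : C) : {z = w} + {z <> w}.
Proof.
  destruct z as [a b], w as [c d].
  destruct (Req_EM_T a c) as [H1|H1]; destruct (Req_EM_T b d) as [H2|H2];
    [left; subst; reflexivity | right | right | right]; intro H; inversion H; auto.
Defined.

Definition Omega (w : C) : Prop := 0 <= Re w < PI.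

Definition in_ray2 (l : C) : Prop := Im l = 0 /\ 2 <= Re l.

(* The resolvent kernel G_lambda(x), written in terms of omega (lambda = -2 cos omega).
   At omega = 0 the expressions are taken by continuity:
   sinh(omega x / b) / sin omega -> x / b and omega / sin omega -> 1. *)
Definition Gker (b : R) (w : C) (x : R) : C :=
  if Req_EM_T x 0 then
    (if Ceq_dec w 0 then RtoC (1 / (2 * PI * b))
     else (w / (RtoC (2 * PI * b) * Csin w))%C)
  else
    (if Ceq_dec w 0 then RtoC ((x / b) / (2 * b * sinh (PI / b * x)))
     else (Csinh (w * RtoC (x / b)) / (RtoC (2 * b) * Csin w * RtoC (sinh (PI / b * x))))%C).

(* Write w = a + i c with 0 <= a < pi and t = x / b.  Then
   |sinh (w t)|^2 = sinh (a t)^2 + sin (c t)^2, and both terms are controlled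
   by sinh (pi t): pi |sinh (a t)| <= a |sinh (pi t)| because sinh s / s is
   nondecreasing on (0, oo), and pi |sin (c t)| <= pi |c t| <= |c| |sinh (pi t)|.
   Hence pi |sinh (w t)| <= |w| |sinh (pi t)|, which is exactly
   |G(x)| <= |G(0)|; the case w = 0 is the limiting inequality
   pi |t| <= |sinh (pi t)|. *)
From Pilot Require Import Defs.
From Stdlib Require Import Reals Lra Psatz.
From Coquelicot Require Import Coquelicot.
Open Scope R_scope.

Lemma sinh_opp (x : R) : sinh (- x) = - sinh x.
Proof. unfold sinh. rewrite Ropp_involutive. field. Qed.

Lemma cosh_sqr (x : R) : cosh x ^ 2 = 1 + sinh x ^ 2.
Proof. unfold cosh, sinh. rewrite exp_Ropp. assert (Hx := exp_pos x). field. lra. Qed.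

Lemma cosh_ge_1 (x : R) : 1 <= cosh x.
Proof.
  assert (Hpos : 0 < cosh x).
  { unfold cosh. assert (H1 := exp_pos x). assert (H2 := exp_pos (- x)). lra. }
  assert (Hsqr := cosh_sqr x). nra.
Qed.

Lemma sinh_ge_id (s : R) : 0 <= s -> s <= sinh s.
Proof.
  intros Hs. destruct (Req_dec s 0) as [->|Hs0]; [rewrite sinh_0; lra|].
  destruct (MVT_cor3 sinh cosh 0 s) as [c [Hc0 [Hcs Hmvt]]]; [lra| |].
  - intros; apply derivable_pt_lim_sinh.
  - rewrite Hmvt, sinh_0. assert (Hc := cosh_ge_1 c). nra.
Qed.

Lemma Rabs_le_Rabs_sinh (x : R) : Rabs x <= Rabs (sinh x).
Proof.
  destruct (Rle_dec 0 x) as [Hx|Hx].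
  - assert (H := sinh_ge_id x Hx). rewrite !Rabs_right; lra.
  - assert (H := sinh_ge_id (- x) ltac:(lra)). rewrite sinh_opp in H.
    rewrite !Rabs_left1; lra.
Qed.

Lemma Rabs_mul_le_Rabs_sinh (k t : R) : 0 <= k -> k * Rabs t <= Rabs (sinh (k * t)).
Proof.
  intros Hk. rewrite <- (Rabs_right k) at 1 by lra. rewrite <- Rabs_mult.
  apply Rabs_le_Rabs_sinh.
Qed.

Lemma Rabs_sinh_pos (t : R) : t <> 0 -> 0 < Rabs (sinh t).
Proof.
  intros Ht. assert (H := Rabs_le_Rabs_sinh t). assert (0 < Rabs t) by now apply Rabs_pos_lt.
  lra.
Qed.

Lemma sinh_le_mul_cosh (s : R) : 0 <= s -> sinh s <= s * cosh s.
Proof.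
  intros Hs. destruct (Req_dec s 0) as [->|Hs0]; [rewrite sinh_0; lra|].
  destruct (MVT_cor3 (fun s => s * cosh s - sinh s) (fun s => s * sinh s) 0 s)
    as [c [Hc0 [Hcs Hmvt]]]; [lra| |].
  - intros y _ _.
    replace (y * sinh y) with ((1 * cosh y + y * sinh y) - cosh y) by ring.
    apply (derivable_pt_lim_minus (fun s => s * cosh s) sinh).
    + apply (derivable_pt_lim_mult id cosh);
        [apply derivable_pt_lim_id | apply derivable_pt_lim_cosh].
    + apply derivable_pt_lim_sinh.
  - cbv beta in Hmvt. rewrite sinh_0 in Hmvt. assert (Hc := sinh_ge_id c Hc0).
    assert (0 <= c * sinh c * (s - 0)) by (apply Rmult_le_pos; [apply Rmult_le_pos|]; lra).
    lra.
Qed.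

(* Monotonicity of sinh s / s, whose derivative has the sign of s cosh s - sinh s. *)
Lemma mul_sinh_le_mul_sinh (u v : R) : 0 < u <= v -> v * sinh u <= u * sinh v.
Proof.
  intros [Hu Huv]. destruct (Req_dec u v) as [<-|Hn]; [lra|].
  destruct (MVT_cor3 (fun s => sinh s / s) (fun s => (cosh s * s - 1 * sinh s) / s ^ 2) u v)
    as [c [Huc [Hcv Hmvt]]]; [lra| |].
  - intros y Hy _.
    replace (y ^ 2) with (Rsqr (id y)) by (unfold Rsqr, id; ring).
    apply (derivable_pt_lim_div sinh id);
      [apply derivable_pt_lim_sinh | apply derivable_pt_lim_id | unfold id; lra].
  - cbv beta in Hmvt. assert (Hh := sinh_le_mul_cosh c ltac:(lra)).
    assert (Hd : 0 <= (cosh c * c - 1 * sinh c) / c ^ 2)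
      by (apply Rdiv_le_0_compat; nra).
    assert (Hratio : sinh u / u <= sinh v / v) by nra.
    replace (v * sinh u) with (u * v * (sinh u / u)) by (field; repeat split; lra).
    replace (u * sinh v) with (u * v * (sinh v / v)) by (field; repeat split; lra).
    apply Rmult_le_compat_l; nra.
Qed.

Lemma Rabs_sinh_scale_le (k a t : R) :
  0 <= a <= k -> k * Rabs (sinh (a * t)) <= a * Rabs (sinh (k * t)).
Proof.
  intros Ha.
  assert (Hnonneg : forall t, 0 <= t -> k * Rabs (sinh (a * t)) <= a * Rabs (sinh (k * t))).
  { clear t. intros t Ht.
    destruct (Req_dec t 0) as [->|Ht0].
    { rewrite !Rmult_0_r, sinh_0, Rabs_R0. lra. }
    destruct (Req_dec a 0) as [->|Ha0].
    { rewrite !Rmult_0_l, sinh_0, Rabs_R0. assert (H := Rabs_pos (sinh (k * t))). lra. }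
    assert (Hmono := mul_sinh_le_mul_sinh (a * t) (k * t) ltac:(split; nra)).
    assert (H1 := sinh_ge_id (a * t) ltac:(nra)).
    assert (H2 := sinh_ge_id (k * t) ltac:(nra)).
    rewrite !Rabs_right by nra.
    apply (Rmult_le_reg_l t); nra. }
  destruct (Rle_dec 0 t) as [Ht|Ht]; [now apply Hnonneg|].
  assert (H := Hnonneg (- t) ltac:(lra)).
  rewrite !Ropp_mult_distr_r_reverse, !sinh_opp, !Rabs_Ropp in H. exact H.
Qed.

Lemma Rabs_sin_le (y : R) : Rabs (sin y) <= Rabs y.
Proof.
  assert (Hnonneg : forall y, 0 <= y -> Rabs (sin y) <= y).
  { clear y. intros y Hy. assert (Hb := SIN_bound y).
    destruct (Rle_dec y 1) as [Hy1|Hy1].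
    - destruct (Req_dec y 0) as [->|Hy0]; [rewrite sin_0, Rabs_R0; lra|].
      assert (0 <= sin y) by (apply sin_ge_0; assert (H := PI2_1); lra).
      assert (Hs := sin_lt_x y ltac:(lra)). rewrite Rabs_right; lra.
    - unfold Rabs; destruct (Rcase_abs (sin y)); lra. }
  destruct (Rle_dec 0 y) as [Hy|Hy].
  - rewrite (Rabs_right y) by lra. now apply Hnonneg.
  - assert (H := Hnonneg (- y) ltac:(lra)). rewrite sin_neg, Rabs_Ropp in H.
    rewrite (Rabs_left y); lra.
Qed.

Lemma Csinh_pair (a c : R) : Csinh (a, c) = (sinh a * cos c, cosh a * sin c).
Proof.
  unfold Csinh, Cexp, sinh, cosh. apply injective_projections; simpl;
    rewrite ?cos_neg, ?sin_neg; field.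
Qed.

Lemma Csin_pair (a c : R) : Csin (a, c) = (sin a * cosh c, cos a * sinh c).
Proof.
  unfold Csin. replace (Ci * (a, c))%C with ((- c, a) : C)
    by (apply injective_projections; simpl; ring).
  unfold Cexp, sinh, cosh. apply injective_projections; simpl;
    rewrite ?cos_neg, ?sin_neg, ?Ropp_involutive; field.
Qed.

Lemma Cmod_Csinh_sqr (a c : R) : Cmod (Csinh (a, c)) ^ 2 = sinh a ^ 2 + sin c ^ 2.
Proof.
  rewrite Csinh_pair, Cmod2_alt; simpl Re; simpl Im.
  assert (Hch := cosh_sqr a). assert (Hsc := sin2_cos2 c). unfold Rsqr in Hsc. nra.
Qed.

Lemma Csin_neq0 (w : C) : Omega w -> w <> RtoC 0 -> Csin w <> RtoC 0.
Proof.
  destruct w as [a c]. unfold Omega; simpl. intros [Ha0 HaPI] Hw.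
  rewrite Csin_pair. intros Hsin. injection Hsin as Hre Him.
  assert (Hc := cosh_ge_1 c).
  assert (Ha : a = 0).
  { destruct (Req_dec a 0) as [|Hn]; [assumption|].
    assert (0 < sin a) by (apply sin_gt_0; lra). nra. }
  subst a. rewrite cos_0, Rmult_1_l in Him.
  assert (Hc0 : c = 0).
  { destruct (Req_dec c 0) as [|Hn]; [assumption|].
    assert (H := Rabs_sinh_pos c Hn). rewrite Him, Rabs_R0 in H. lra. }
  subst c. now apply Hw.
Qed.

Lemma Cmod_Csinh_mul_le (k a c t : R) : 0 <= a <= k ->
  k * Cmod (Csinh ((a, c) * RtoC t)) <= Cmod (a, c) * Rabs (sinh (k * t)).
Proof.
  intros Ha.
  replace ((a, c) * RtoC t)%C with ((a * t, c * t) : C)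
    by (apply injective_projections; simpl; ring).
  set (Q := Rabs (sinh (k * t))).
  assert (HQ : 0 <= Q) by apply Rabs_pos.
  assert (Hre : k * Rabs (sinh (a * t)) <= a * Q) by now apply Rabs_sinh_scale_le.
  assert (Him : k * Rabs (sin (c * t)) <= Rabs c * Q).
  { assert (H1 := Rabs_sin_le (c * t)). assert (H2 := Rabs_mul_le_Rabs_sinh k t ltac:(lra)).
    rewrite Rabs_mult in H1. fold Q in H2.
    assert (0 <= Rabs c) by apply Rabs_pos. assert (0 <= Rabs t) by apply Rabs_pos. nra. }
  assert (Hsqr : (k * Cmod (Csinh (a * t, c * t))) ^ 2 <= (Cmod (a, c) * Q) ^ 2).
  { rewrite !Rpow_mult_distr, Cmod_Csinh_sqr, Cmod2_alt; simpl Re; simpl Im.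
    rewrite <- (pow2_abs (sinh (a * t))), <- (pow2_abs (sin (c * t))), <- (pow2_abs c).
    assert (0 <= k * Rabs (sinh (a * t))) by (apply Rmult_le_pos; [lra | apply Rabs_pos]).
    assert (0 <= k * Rabs (sin (c * t))) by (apply Rmult_le_pos; [lra | apply Rabs_pos]).
    assert (Hre2 := pow_incr _ _ 2 (conj H Hre)).
    assert (Him2 := pow_incr _ _ 2 (conj H0 Him)).
    rewrite !Rpow_mult_distr in Hre2, Him2. lra. }
  apply (Rsqr_incr_0_var _ _); [rewrite !Rsqr_pow2; exact Hsqr|].
  apply Rmult_le_pos; [apply Cmod_ge_0 | exact HQ].
Qed.

Lemma sinh_scaled_arg (b x : R) : 0 < b -> sinh (PI / b * x) = sinh (PI * (x / b)).
Proof. intros Hb. f_equal. field. lra. Qed.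

Lemma Rabs_sinh_scaled_pos (b x : R) : 0 < b -> x <> 0 -> 0 < Rabs (sinh (PI * (x / b))).
Proof.
  intros Hb Hx. apply Rabs_sinh_pos. intros H. apply Hx.
  assert (HPI := PI_RGT_0).
  replace x with (PI * (x / b) * b / PI) by (field; repeat split; lra).
  rewrite H. field. lra.
Qed.

Lemma RtoC_neq0 (x : R) : x <> 0 -> RtoC x <> RtoC 0.
Proof. intros Hx H. apply Hx. now injection H. Qed.

Lemma Cmod_Gker_w0_origin (b : R) : 0 < b -> Cmod (Gker b (RtoC 0) 0) = 1 / (PI * (2 * b)).
Proof.
  intros Hb. assert (HPI := PI_RGT_0).
  unfold Gker. destruct (Req_EM_T 0 0) as [_|n]; [|contradiction].
  destruct (Defs.Ceq_dec (RtoC 0) (RtoC 0)) as [_|n]; [|contradiction].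
  rewrite Cmod_R, Rabs_right; [field; lra|].
  apply Rle_ge, Rdiv_le_0_compat; nra.
Qed.

Lemma Cmod_Gker_w0 (b x : R) : 0 < b -> x <> 0 ->
  Cmod (Gker b (RtoC 0) x) = Rabs (x / b) / (2 * b * Rabs (sinh (PI * (x / b)))).
Proof.
  intros Hb Hx. assert (Hq := Rabs_sinh_scaled_pos b x Hb Hx).
  assert (Hs : sinh (PI * (x / b)) <> 0) by (intros H; rewrite H, Rabs_R0 in Hq; lra).
  unfold Gker. destruct (Req_EM_T x 0) as [|_]; [contradiction|].
  destruct (Defs.Ceq_dec (RtoC 0) (RtoC 0)) as [_|n]; [|contradiction].
  rewrite Cmod_R, sinh_scaled_arg, Rabs_div, Rabs_mult, (Rabs_right (2 * b)) by
    (lra || (apply Rmult_integral_contrapositive; split; [lra | exact Hs])).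
  reflexivity.
Qed.

Lemma Cmod_Gker_origin (b : R) (w : C) : 0 < b -> w <> RtoC 0 -> Csin w <> RtoC 0 ->
  Cmod (Gker b w 0) = Cmod w / (PI * (2 * b * Cmod (Csin w))).
Proof.
  intros Hb Hw Hsin. assert (HPI := PI_RGT_0).
  unfold Gker. destruct (Req_EM_T 0 0) as [_|n]; [|contradiction].
  destruct (Defs.Ceq_dec w (RtoC 0)) as [|_]; [contradiction|].
  rewrite Cmod_div by (apply Cmult_neq_0; [apply RtoC_neq0; nra | exact Hsin]).
  rewrite Cmod_mult, Cmod_R, Rabs_right by nra.
  f_equal. ring.
Qed.

Lemma Cmod_Gker (b x : R) (w : C) : 0 < b -> x <> 0 -> w <> RtoC 0 -> Csin w <> RtoC 0 ->
  Cmod (Gker b w x)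
  = Cmod (Csinh (w * RtoC (x / b))) / (2 * b * Cmod (Csin w) * Rabs (sinh (PI * (x / b)))).
Proof.
  intros Hb Hx Hw Hsin. assert (Hq := Rabs_sinh_scaled_pos b x Hb Hx).
  assert (Hs : sinh (PI * (x / b)) <> 0) by (intros H; rewrite H, Rabs_R0 in Hq; lra).
  unfold Gker. destruct (Req_EM_T x 0) as [|_]; [contradiction|].
  destruct (Defs.Ceq_dec w (RtoC 0)) as [|_]; [contradiction|].
  rewrite sinh_scaled_arg by exact Hb.
  rewrite Cmod_div
    by (apply Cmult_neq_0; [apply Cmult_neq_0; [apply RtoC_neq0; lra | exact Hsin]
                           | exact (RtoC_neq0 _ Hs)]).
  rewrite !Cmod_mult, !Cmod_R, (Rabs_right (2 * b)) by lra.
  reflexivity.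
Qed.

Lemma Rdiv_le_Rdiv_cross (k d q N M : R) : 0 < k -> 0 < d -> 0 < q ->
  k * N <= M * q -> N / (d * q) <= M / (k * d).
Proof.
  intros Hk Hd Hq H.
  replace (N / (d * q)) with (k * N / (k * d * q)) by (field; repeat split; lra).
  replace (M / (k * d)) with (M * q / (k * d * q)) by (field; repeat split; lra).
  apply Rmult_le_compat_r; [|exact H].
  left. apply Rinv_0_lt_compat, Rmult_lt_0_compat; [apply Rmult_lt_0_compat|]; assumption.
Qed.

Theorem proposition3p2 (b : R) (hb : 0 < b) (lam : C) (hlam : ~ in_ray2 lam)
  (w : C) (hw : Omega w) (hlw : lam = (- (RtoC 2) * Ccos w)%C) :
  forall x : R, Cmod (Gker b w x) <= Cmod (Gker b w 0).
Proof.
  intros x. destruct (Req_dec x 0) as [->|Hx]; [apply Rle_refl|].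
  assert (HPI := PI_RGT_0).
  assert (Hq := Rabs_sinh_scaled_pos b x hb Hx).
  destruct (Defs.Ceq_dec w (RtoC 0)) as [->|Hw].
  - rewrite Cmod_Gker_w0, Cmod_Gker_w0_origin by assumption.
    apply Rdiv_le_Rdiv_cross; [lra | lra | exact Hq |].
    rewrite Rmult_1_l. apply Rabs_mul_le_Rabs_sinh. lra.
  - assert (Hsin := Csin_neq0 w hw Hw).
    assert (HS := proj1 (Cmod_gt_0 _) Hsin).
    rewrite Cmod_Gker, Cmod_Gker_origin by assumption.
    apply Rdiv_le_Rdiv_cross; [lra | nra | exact Hq |].
    destruct w as [a c]. unfold Omega in hw; simpl in hw.
    apply Cmod_Csinh_mul_le. lra.
Qed.
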